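(* The algorithm $K_2$ for the $2$-cache problem is a knowledge state algorithm (that is, each specified adjustment satisfies the required inequality $(\omega\wedge r)(x)\ge\mathrm{adjust}+\sum_i\lambda_i\omega_i(x)$ for all configurations $x$), and the function $\Phi$ defined by $\Phi(A^{a,b})=0$ and $\Phi(B^{a,b,c})=\tfrac12$ is a $\tfrac32$-ks-potential for $K_2$.
   Context: The $k$-cache problem: there is an infinite set $P$ of pages; the state set $\mathcal X$ is the set of $k$-element subsets of $P$ (cache contents), with a given initial cache $s^0$; the requests are the pages, $\mathcal R=P$; $d(x,y)=|x\setminus y|$; and $\mathrm{cost}(x,r,y)=2$ if $x=y$ and $r\notin x$; $\mathrm{cost}(x,r,y)=d(x,y)$ if $r\in x$ or $r\in y$; $\mathrm{cost}(x,r,y)=d(x,y)+1$ otherwise. $\Pi$ is the set of finitely supported probability distributions on $\mathcal X$; for $\pi,\pi'\in\Pi$, $\mathrm{cost}(\pi,r,\pi')$ is the minimum of $\sum_{x,y}\gamma(x,y)\mathrm{cost}(x,r,y)$ over distributions $\gamma$ on $\mathrm{supp}(\pi)\times\mathrm{supp}(\pi')$ with marginals $\pi,\pi'$. An estimator is a function $\omega:\mathcal X\to[0,\infty)$ with $\omega(y)\le\omega(x)+d(x,y)$; the update operator is $(\omega\wedge r)(y)=\inf_{x}\{\omega(x)+\mathrm{cost}(x,r,y)\}$. Bar notation: a string $\alpha$ of distinct page names and exactly $k$ bars, with at least $i$ page names to the left of the $i$-th bar, denotes the estimator $\omega_\alpha(y)=\min_{x\in S_\alpha}d(x,y)$, where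 $S_\alpha$ is the set of configurations $x$ such that for each $i=1,\dots,k$ at least $i$ elements of $x$ are written to the left of the $i$-th bar. E.g. for $k=2$, $ab||=d(\{a,b\},\cdot)$ and $a|bc|$ has $S=\{\{a,b\},\{a,c\}\}$. Knowledge state algorithm: a knowledge state is a pair $(\pi,\omega)$, $\pi\in\Pi$, $\omega$ an estimator; the initial one is $(s^0,\omega^0)$ with $\omega^0(s^0)=0$. For each knowledge state $k=(\pi,\omega)$ and request $r$ the algorithm specifies subsequent knowledge states $k_i=(\pi_i,\omega_i)$ with weights $\lambda_i>0$ summing to $1$ (the next state is $k_i$ with probability $\lambda_i$) and a real number $\mathrm{adjust}(k,r)$, required to satisfy $(\omega\wedge r)(x)\ge\mathrm{adjust}(k,r)+\sum_i\lambda_i\omega_i(x)$ for all $x$. Step cost $\mathrm{cost}(k,r)=\mathrm{cost}(\pi,r,\sum_i\lambda_i\pi_i)$. A $C$-ks-potential is a function $\Phi\ge0$ on knowledge states such that for every knowledge state $k$ and request $r$: $\mathrm{cost}(k,r)+\sum_i\lambda_i\Phi(k_i)-\Phi(k)\le C\cdot\mathrm{adjust}(k,r)$. Algorithm $K_2$ ($k=2$; $a,b,c,d$ always denote distinct pages). Knowledge states: $A^{a,b}=(\{a,b\},\ ab||)$ (point mass on $\{a,b\}$; $A^{a,b}=A^{b,a}$), and $B^{a,b,c}=(\tfrac12\{a,b\}+\tfrac12\{a,c\},\ a|bc|)$ (so $B^{a,b,c}=B^{a,c,b}$). Initial state $A^{a,b}$ where $s^0=\{a,b\}$. Transitions: from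 $A^{a,b}$: request $a$ or $b$: stay in $A^{a,b}$, adjust $0$; request $c\notin\{a,b\}$: go to $B^{c,a,b}$, adjust $1$. From $B^{a,b,c}$: request $a$: stay, adjust $0$; request $b$: go to $A^{b,a}$, adjust $0$; request $c$: go to $A^{c,a}$, adjust $0$; request $d\notin\{a,b,c\}$: go to each of $A^{d,a},A^{d,b},A^{d,c}$ with probability $\tfrac13$, adjust $\tfrac13$. *)

From HB Require Import structures.
From mathcomp Require Import all_boot all_order all_algebra.
From mathcomp Require Import finmap.
From mathcomp Require Import boolp classical_sets reals.
Set Implicit Arguments. Unset Strict Implicit. Unset Printing Implicit Defensive.
Import Order.TTheory GRing.Theory Num.Theory.
Local Open Scope ring_scope.

Section KCache.
Variables (R : realType) (T : choiceType).
(* T = the set P of pages; configurations are finite sets of pages. *)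

Definition config := {fset T}.

Definition Xset (k : nat) : set config := [set x : config | #|` x| = k]%classic.

Definition dist (x y : config) : R := (#|` fsetD x y|)%:R.

Definition cost (x : config) (r : T) (y : config) : R :=
  if (x == y) && (r \notin x) then 2
  else if (r \in x) || (r \in y) then dist x y
  else dist x y + 1.

Definition update (k : nat) (w : config -> R) (r : T) (y : config) : R :=
  inf [set w x + cost x r y | x in Xset k]%classic.

Definition estimator (k : nat) (w : config -> R) : Prop :=
  forall x y, Xset k x -> Xset k y -> 0 <= w x /\ w y <= w x + dist x y.

Definition is_fsdist (k : nat) (pi : config -> R) : Prop :=
  (forall x, 0 <= pi x) /\ (forall x, pi x != 0 -> Xset k x) /\
  exists s : seq config,
    [/\ uniq s, (forall x, x \notin s -> pi x = 0) & \sum_(x <- s) pi x = 1].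

(* c is the cost of some coupling gamma of pi and pi' (a distribution on
   supp(pi) x supp(pi') with marginals pi and pi'); s, s' are finite lists
   containing the supports. *)
Definition coupling_cost (pi : config -> R) (r : T) (pi' : config -> R) (c : R)
  : Prop :=
  exists (g : config -> config -> R) (s s' : seq config),
    [/\ uniq s /\ uniq s',
        (forall x, x \notin s -> pi x = 0) /\
        (forall y, y \notin s' -> pi' y = 0),
        (forall x y, 0 <= g x y) /\
        (forall x y, g x y != 0 -> pi x != 0 /\ pi' y != 0),
        (forall x, \sum_(y <- s') g x y = pi x) /\
        (forall y, \sum_(x <- s) g x y = pi' y) &
        c = \sum_(x <- s) \sum_(y <- s') g x y * cost x r y].

(* cost(pi, r, pi') = minimum over couplings (the infimum is attained) *)
Definition dcost (pi : config -> R) (r : T) (pi' : config -> R) : R :=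
  inf [set c | coupling_cost pi r pi' c]%classic.

(* KA a b = A^{a,b};  KB a b c = B^{a,b,c} *)
Inductive kstate := KA of T & T | KB of T & T & T.

Definition kvalid (q : kstate) : bool :=
  match q with
  | KA a b => a != b
  | KB a b c => [&& a != b, a != c & b != c]
  end.

Definition pi_of (q : kstate) : config -> R :=
  match q with
  | KA a b => fun x => (x == [fset a; b]%fset)%:R
  | KB a b c => fun x => (x == [fset a; b]%fset)%:R / 2 + (x == [fset a; c]%fset)%:R / 2
  end.

Definition omega_of (q : kstate) : config -> R :=
  match q with
  | KA a b => fun y => dist [fset a; b]%fset y
  | KB a b c => fun y => Num.min (dist [fset a; b]%fset y) (dist [fset a; c]%fset y)
  end.

(* transitions: (list of (lambda_i, k_i), adjust) *)
Definition K2 (q : kstate) (r : T) : seq (R * kstate) * R :=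
  match q with
  | KA a b => if (r == a) || (r == b) then ([:: (1, KA a b)], 0)
              else ([:: (1, KB r a b)], 1)
  | KB a b c =>
      if r == a then ([:: (1, KB a b c)], 0)
      else if r == b then ([:: (1, KA b a)], 0)
      else if r == c then ([:: (1, KA c a)], 0)
      else ([:: (1/3, KA r a); (1/3, KA r b); (1/3, KA r c)], 1/3)
  end.

Definition next_pi (l : seq (R * kstate)) : config -> R :=
  fun x => \sum_(p <- l) p.1 * pi_of p.2 x.

Definition next_omega (l : seq (R * kstate)) : config -> R :=
  fun x => \sum_(p <- l) p.1 * omega_of p.2 x.

Definition is_ks_algorithm (alg : kstate -> T -> seq (R * kstate) * R) : Prop :=
  (forall q, kvalid q -> is_fsdist 2 (pi_of q) /\ estimator 2 (omega_of q)) /\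
  forall q r, kvalid q ->
    [/\ all (fun p => kvalid p.2) (alg q r).1,
        all (fun p => 0 < p.1) (alg q r).1,
        \sum_(p <- (alg q r).1) p.1 = 1 &
        forall x, Xset 2 x ->
          update 2 (omega_of q) r x >= (alg q r).2 + next_omega (alg q r).1 x].

Definition step_cost (alg : kstate -> T -> seq (R * kstate) * R) q r : R :=
  dcost (pi_of q) r (next_pi (alg q r).1).

Definition is_ks_potential (alg : kstate -> T -> seq (R * kstate) * R)
  (Phi : kstate -> R) (C : R) : Prop :=
  (forall q, kvalid q -> 0 <= Phi q) /\
  forall q r, kvalid q ->
    step_cost alg q r + \sum_(p <- (alg q r).1) p.1 * Phi p.2 - Phi q
      <= C * (alg q r).2.

Definition Phi2 (q : kstate) : R :=
  match q with KA _ _ => 0 | KB _ _ _ => 1/2 end.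

End KCache.

From Pilot Require Import Defs.
From HB Require Import structures.
From mathcomp Require Import all_boot all_order all_algebra.
From mathcomp Require Import finmap.
From mathcomp Require Import boolp classical_sets reals.
From mathcomp Require Import ring lra zify.
Set Implicit Arguments. Unset Strict Implicit. Unset Printing Implicit Defensive.
Import Order.TTheory GRing.Theory Num.Theory.
Local Open Scope ring_scope.

(* Serving a request r while moving from z to x costs at least d(z,y) + d(y,x)
   for some configuration y containing r: take y = z itself or x itself if one
   of them contains r, and otherwise z with a page outside x (any page, if
   z = x) evicted in favour of r.  Hence, for estimators w and w', the update
   inequality adjust + w'(x) <= (w /\ r)(x) only has to be checked at the
   configurations y containing r, where for K_2 it reduces to comparing a few
   membership indicators of y = {r, t}.  For the potential, every transition is
   matched by an explicit coupling whose target configurations all contain r,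
   so each coupled pair costs its distance, which is 0 or 1. *)

Section Distance.
Variables (R : realType) (T : choiceType).
Implicit Types (x y z : config T) (p q r s t : T).

Lemma dist_ge0 x y : 0 <= dist R x y.
Proof. exact: ler0n. Qed.

Lemma distxx x : dist R x x = 0.
Proof. by rewrite /dist fsetDv cardfs0. Qed.

Lemma dist_triangle x y z : dist R x y <= dist R x z + dist R z y.
Proof.
rewrite /dist -natrD ler_nat.
apply: leq_trans (leq_card_fsetU _ _); apply: fsubset_leq_card.
by apply/fsubsetP => t; rewrite !inE => /andP[-> ->]; case: (t \in z).
Qed.

Lemma dist_fset2 p q y : p != q ->
  dist R [fset p; q]%fset y = (p \notin y)%:R + (q \notin y)%:R.
Proof.
move=> pq; rewrite /dist -natrD; congr _%:R.
rewrite (cardfsD1 p) (cardfsD1 q (_ `\ p)%fset) !inE !eqxx [q == p]eq_sym.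
rewrite (negbTE pq) /= !andbT addnA.
rewrite -[RHS]addn0; congr (_ + _)%N; apply/eqP; rewrite cardfs_eq0.
by apply/eqP/fsetP => t; rewrite !inE; case: (t == p); case: (t == q); rewrite ?andbF.
Qed.

Lemma dist_fset2_replace p q r s : p != q -> r != p -> r != q ->
  s \in [fset p; q]%fset -> dist R [fset p; q]%fset [fset r; s]%fset = 1.
Proof.
move=> pq rp rq; rewrite dist_fset2 // !inE ![_ == r]eq_sym (negbTE rp) (negbTE rq).
by case/orP=> /eqP->; rewrite eqxx ?[q == p]eq_sym (negbTE pq) /= ?add0r ?addr0.
Qed.

Lemma cost_ge_dist x r y : dist R x y <= cost R x r y.
Proof.
rewrite /cost; case: ifP => [/andP[/eqP xy _]|_].
  by rewrite xy distxx; lra.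
by case: ifP => _; lra.
Qed.

Lemma cost_ge0 x r y : 0 <= cost R x r y.
Proof. by apply: le_trans (cost_ge_dist x r y); exact: dist_ge0. Qed.

Lemma cost_requested x r y : r \in y -> cost R x r y = dist R x y.
Proof.
move=> ry; rewrite /cost ry orbT; case: eqP => [xy|//].
by rewrite xy ry.
Qed.

Lemma exists_evictable k z x : (0 < k)%N -> Xset k z -> Xset k x ->
  exists2 t, t \in z & (z != x) ==> (t \notin x).
Proof.
rewrite /Xset /= => k_gt0 hz hx; have [zx|zNx] := eqVneq z x.
  have /fset0Pn[t tz] : z != fset0 by rewrite -cardfs_gt0 hz.
  by exists t.
have /fset0Pn[t] : (z `\` x)%fset != fset0.
  by apply: contra zNx; rewrite fsetD_eq0 eqEfcard hz hx leqnn andbT.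
by rewrite inE => /andP[tNx tz]; exists t.
Qed.

Lemma cost_ge_detour k z r x : (0 < k)%N -> Xset k z -> Xset k x ->
  exists y, [/\ Xset k y, r \in y & dist R z y + dist R y x <= cost R z r x].
Proof.
move=> k_gt0 hz hx; have [rx|rNx] := boolP (r \in x).
  by exists x; split=> //; rewrite distxx addr0 cost_ge_dist.
have [rz|rNz] := boolP (r \in z).
  by exists z; split=> //; rewrite distxx add0r cost_ge_dist.
have [t tz tNx] := exists_evictable k_gt0 hz hx.
pose y := (r |` (z `\ t))%fset.
have dzy : (#|` (z `\` y)%fset| <= 1)%N.
  rewrite -(cardfs1 t) fsubset_leq_card //; apply/fsubsetP => u.
  by rewrite !inE; case: (u == t); case: (u \in z); rewrite ?orbT ?andbF.
have dyx : (#|` (y `\` x)%fset| <= 1 + #|` (z `\` x `\ t)%fset|)%N.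
  rewrite -(cardfs1 r); apply: leq_trans (leq_card_fsetU _ _).
  apply: fsubset_leq_card; apply/fsubsetP => u; rewrite !inE.
  by case: (u =P r) => //= _ /and3P[-> -> ->].
have dzx := cardfsD1 t (z `\` x)%fset; rewrite !inE tz andbT in dzx.
exists y; split.
- by move: hz; rewrite /Xset /= cardfsU1 !inE (negbTE rNz) andbF (cardfsD1 t) tz.
- by rewrite !inE eqxx.
rewrite /cost (negbTE rNz) (negbTE rNx) /dist -natrD; case: eqP => [zx|/eqP zNx] /=.
  by rewrite zx fsetDv cardfs0 in dzx dyx; rewrite ler_nat; lia.
by rewrite (implyP tNx zNx) in dzx; rewrite natr1 ler_nat; lia.
Qed.
End Distance.

Section Estimators.
Variables (R : realType) (T : choiceType) (k : nat).
Implicit Types (w : config T -> R) (x y z : config T).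

Lemma estimator_dist (S : config T) : estimator k (dist R S).
Proof. by move=> x y _ _; rewrite dist_ge0 dist_triangle. Qed.

Lemma estimator_min w1 w2 : estimator k w1 -> estimator k w2 ->
  estimator k (fun x => Num.min (w1 x) (w2 x)).
Proof.
move=> e1 e2 x y hx hy; have [w1x0 w1xy] := e1 x y hx hy.
have [w2x0 w2xy] := e2 x y hx hy; split; first by rewrite le_min w1x0.
by rewrite addr_minl le_min !ge_min w1xy w2xy orbT.
Qed.

Lemma update_ge w r x v : Xset k x ->
  (forall z, Xset k z -> v <= w z + cost R z r x) -> v <= update k w r x.
Proof.
move=> hx h; apply: lb_le_inf; first by exists (w x + cost R x r x); exists x.
by move=> _ [z hz <-]; exact: h.
Qed.

Lemma update_ge_requested w w' r x v : (0 < k)%N ->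
  estimator k w -> estimator k w' -> Xset k x ->
  (forall y, Xset k y -> r \in y -> v + w' y <= w y) -> v + w' x <= update k w r x.
Proof.
move=> k_gt0 ew ew' hx hreq; apply: update_ge => // z hz.
have [y [hy ry dzyx]] := cost_ge_detour R r k_gt0 hz hx.
have [_ w'yx] := ew' y x hy hx; have [_ wzy] := ew z y hz hy.
have := hreq y hy ry; lra.
Qed.

Lemma estimator_wsum I (l : seq I) (lam : I -> R) (w : I -> config T -> R) :
  all (fun i => 0 <= lam i) l -> \sum_(i <- l) lam i = 1 ->
  (forall i, estimator k (w i)) -> estimator k (fun x => \sum_(i <- l) lam i * w i x).
Proof.
move=> hl hsum ew x y hx hy.
suff : 0 <= \sum_(i <- l) lam i * w i x /\ \sum_(i <- l) lam i * w i y <=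
       \sum_(i <- l) lam i * w i x + (\sum_(i <- l) lam i) * dist R x y.
  by rewrite hsum mul1r.
elim: l hl {hsum} => [|i l IH] /=; first by rewrite !big_nil; lra.
case/andP=> li /IH[IH0 IH1]; rewrite !big_cons mulrDl.
have [wx0 wxy] := ew i x y hx hy; have := ler_wpM2l li wxy.
by rewrite mulrDr; split; [rewrite addr_ge0 ?mulr_ge0 | lra].
Qed.
End Estimators.

Section Distributions.
Variables (R : realType) (T : choiceType).
Implicit Types (x y : config T) (pi : config T -> R).

Lemma sum_pred1_uniq (I : eqType) (s : seq I) a (F : I -> R) :
  uniq s -> a \in s -> \sum_(i <- s) F i * (i == a)%:R = F a.
Proof.
move=> us sa; rewrite (big_rem a) //= eqxx mulr1 big1_seq ?addr0 // => i /andP[_].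
by rewrite (mem_rem_uniq a us) inE => /andP[/negbTE-> _]; rewrite mulr0.
Qed.

Definition fdist (l : seq (R * config T)) x : R := \sum_(p <- l) p.1 * (x == p.2)%:R.

Lemma fdist_eq0 l x : x \notin [seq p.2 | p <- l] -> fdist l x = 0.
Proof.
move=> xNl; rewrite /fdist big1_seq // => p /andP[_ pl].
by rewrite (_ : x == p.2 = false) ?mulr0 //; apply: contraNF xNl => /eqP->; exact: map_f.
Qed.

Lemma fdist_gt0 l x : all (fun p => 0 < p.1) l ->
  x \in [seq p.2 | p <- l] -> 0 < fdist l x.
Proof.
move=> /allP hw /mapP[p pl ->]; rewrite /fdist (big_rem p) //= eqxx mulr1.
have : 0 <= \sum_(q <- rem p l) q.1 * (p.2 == q.2)%:R.
  rewrite big_seq sumr_ge0 // => q /mem_rem ql.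
  by rewrite mulr_ge0 ?ler0n ?ltW ?hw.
by have := hw p pl; lra.
Qed.

Lemma is_fsdist_fdist k l pi : all (fun p => 0 <= p.1) l ->
  (forall p, p \in l -> Xset k p.2) -> \sum_(p <- l) p.1 = 1 ->
  pi =1 fdist l -> is_fsdist k pi.
Proof.
move=> /allP hw hX hsum hpi; split; [|split].
- by move=> x; rewrite hpi /fdist big_seq sumr_ge0 // => p pl; rewrite mulr_ge0 ?ler0n ?hw.
- move=> x; rewrite hpi => nz.
  have /mapP[p pl ->] : x \in [seq p.2 | p <- l].
    by apply: contraNT nz => /fdist_eq0->; rewrite eqxx.
  exact: hX.
- exists (undup [seq p.2 | p <- l]); split; first exact: undup_uniq.
    by move=> x; rewrite mem_undup hpi => /fdist_eq0.
  rewrite -hsum (eq_bigr _ (fun x _ => hpi x)) /fdist exchange_big /=.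
  apply: eq_big_seq => p pl.
  by rewrite sum_pred1_uniq ?undup_uniq // mem_undup map_f.
Qed.

Lemma dcost_le pi r pi' c : coupling_cost pi r pi' c -> dcost pi r pi' <= c.
Proof.
move=> hc; apply: ge_inf hc; exists 0 => _ [g [s [s' [_ _ [g0 _] _ ->]]]].
by apply: sumr_ge0 => x _; apply: sumr_ge0 => y _; rewrite mulr_ge0 ?cost_ge0.
Qed.

Lemma coupling_cost_pairs (l : seq (R * (config T * config T))) pi pi' r :
  all (fun p => 0 < p.1) l ->
  pi =1 fdist [seq (p.1, p.2.1) | p <- l] ->
  pi' =1 fdist [seq (p.1, p.2.2) | p <- l] ->
  coupling_cost pi r pi' (\sum_(p <- l) p.1 * cost R p.2.1 r p.2.2).
Proof.
move=> hw hpi hpi'; have /allP hw' := hw.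
set s := undup [seq p.2.1 | p <- l]; set s' := undup [seq p.2.2 | p <- l].
have ls p : p \in l -> p.2.1 \in s by rewrite mem_undup; exact: map_f.
have ls' p : p \in l -> p.2.2 \in s' by rewrite mem_undup; exact: map_f.
exists (fun x y => \sum_(p <- l) p.1 * ((x, y) == p.2)%:R), s, s'; split.
- by rewrite !undup_uniq.
- by split=> x; rewrite mem_undup => xNl; rewrite ?hpi ?hpi' fdist_eq0 // -map_comp.
- split=> [x y|x y nz].
    by rewrite big_seq sumr_ge0 // => p pl; rewrite mulr_ge0 ?ler0n ?ltW ?hw'.
  have [p pl /eqP hxy] : exists2 p, p \in l & (x, y) == p.2.
    apply/hasP; apply: contraNT nz => /hasPn hN.
    by rewrite big1_seq ?eqxx // => p /andP[_ pl]; rewrite (negbTE (hN p pl)) mulr0.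
  have -> : x = p.2.1 by rewrite -hxy.
  have -> : y = p.2.2 by rewrite -hxy.
  rewrite hpi hpi' !gt_eqF ?fdist_gt0 ?all_map //; apply/mapP;
    [exists (p.1, p.2.2) | exists (p.1, p.2.1)]; by rewrite ?map_f.
- split=> [x|y]; rewrite ?hpi ?hpi' /fdist big_map exchange_big /=;
    apply: eq_big_seq => -[w [a b]] pl /=; rewrite -mulr_sumr; congr (_ * _).
    under eq_bigr => y _ do rewrite xpair_eqE -mulnb natrM.
    by rewrite sum_pred1_uniq ?undup_uniq ?(ls' _ pl).
  under eq_bigr => x _ do rewrite xpair_eqE -mulnb natrM mulrC.
  by rewrite sum_pred1_uniq ?undup_uniq ?(ls _ pl).
- transitivity (\sum_(p <- l) \sum_(x <- s) \sum_(y <- s')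
                  p.1 * ((x, y) == p.2)%:R * cost R x r y); last first.
    by rewrite exchange_big; apply: eq_bigr => x _; rewrite exchange_big;
      apply: eq_bigr => y _; rewrite mulr_suml.
  apply: eq_big_seq => -[w [a b]] pl /=.
  rewrite -(sum_pred1_uniq (fun x => w * cost R x r b) (undup_uniq _) (ls _ pl)).
  apply: eq_bigr => x _.
  rewrite -(sum_pred1_uniq (fun y => w * cost R x r y * (x == a)%:R) (undup_uniq _) (ls' _ pl)).
  by apply: eq_bigr => y _; rewrite xpair_eqE -mulnb natrM /=; ring.
Qed.
End Distributions.

Section K2.
Variables (R : realType) (T : choiceType).
Implicit Types (a b c r : T) (q : kstate T) (y : config T).

Lemma card2_memNand y r p p' : #|` y| = 2 -> r \in y ->
  r != p -> r != p' -> p != p' -> ~~ ((p \in y) && (p' \in y)).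
Proof.
move=> hy ry rp rp' pp'; apply/andP => -[py p'y].
have /cardfs1P[t yr] : #|` (y `\ r)%fset| == 1.
  by have := cardfsD1 r y; rewrite hy ry add1n => -[<-].
have : p \in (y `\ r)%fset by rewrite !inE eq_sym rp py.
have : p' \in (y `\ r)%fset by rewrite !inE eq_sym rp' p'y.
by rewrite yr !inE => /eqP p't /eqP pt; rewrite pt p't eqxx in pp'.
Qed.

Lemma estimator_omega_of q : estimator 2 (omega_of R q).
Proof. by case: q => [a b|a b c]; [|apply: estimator_min]; apply: estimator_dist. Qed.

Lemma is_fsdist_pi_of q : kvalid q -> is_fsdist 2 (Defs.pi_of R q).
Proof.
have X2 a b : a != b -> Xset 2 [fset a; b]%fset by rewrite /Xset /= cardfs2 => ->.
case: q => [a b /= ab|a b c /and3P[ab ac bc]].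
  apply: (@is_fsdist_fdist _ _ _ [:: (1, [fset a; b]%fset)]) => //=.
  - by rewrite ler01.
  - by move=> p; rewrite inE => /eqP-> /=; exact: X2.
  - by rewrite big_seq1.
  - by move=> x; rewrite /fdist big_seq1 mul1r.
apply: (@is_fsdist_fdist _ _ _ [:: (1/2, [fset a; b]%fset); (1/2, [fset a; c]%fset)]).
- by rewrite /= !divr_ge0 ?ler01 ?ler0n.
- by move=> p; rewrite !inE => /orP[] /eqP-> /=; exact: X2.
- by rewrite !big_cons big_nil /=; lra.
- by move=> x; rewrite /fdist !big_cons big_nil /=; lra.
Qed.

Lemma K2_weights q r : kvalid q ->
  [/\ all (fun p => kvalid p.2) (K2 R q r).1, all (fun p => 0 < p.1) (K2 R q r).1
     & \sum_(p <- (K2 R q r).1) p.1 = 1].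
Proof.
case: q => [a b /= ab|a b c /and3P[ab ac bc]] /=.
  by case: ifP => [_|/norP[ra rb]]; rewrite /= big_seq1 ltr01 ?ab ?ra ?rb.
case: ifP => [_|/negbT ra]; first by rewrite /= big_seq1 ltr01 ab ac bc.
case: ifP => [_|/negbT rb]; first by rewrite /= big_seq1 ltr01 eq_sym ab.
case: ifP => [_|/negbT rc]; first by rewrite /= big_seq1 ltr01 eq_sym ac.
by rewrite /= !big_cons big_nil ra rb rc divr_gt0 ?ltr0n //=; split=> //; lra.
Qed.

Lemma K2_requested q r y : kvalid q -> Xset 2 y -> r \in y ->
  (K2 R q r).2 + next_omega (K2 R q r).1 y <= omega_of R q y.
Proof.
move=> + hy ry; have excl := card2_memNand hy ry; rewrite /next_omega.
case: q => [a b /= ab|a b c /and3P[ab ac bc]] /=.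
  case: ifP => [_|/norP[ra rb]] /=; rewrite big_seq1 /=; first lra.
  rewrite !dist_fset2 // ry /=.
  set m := Num.min _ _; have ma : m <= 0 + (a \notin y)%:R by rewrite ge_min lexx.
  have mb : m <= 0 + (b \notin y)%:R by rewrite ge_min lexx orbT.
  clearbody m; move: (excl a b ra rb ab) ma mb.
  by case: (a \in y); case: (b \in y) => //= *; lra.
case: ifP => [_|/negbT ra] /=; first by rewrite big_seq1 /=; lra.
case: ifP => [/eqP rb|/negbT rb] /=.
  subst r; have ba : b != a by rewrite eq_sym.
  rewrite big_seq1 /= !dist_fset2 // ry le_min.
  by case: (a \in y); case: (c \in y) => /=; lra.
case: ifP => [/eqP rc|/negbT rc] /=.
  subst r; have ca : c != a by rewrite eq_sym.
  rewrite big_seq1 /= !dist_fset2 // ry le_min.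
  by case: (a \in y); case: (b \in y) => /=; lra.
rewrite !big_cons big_nil /= !dist_fset2 // ry.
move: (excl a b ra rb ab) (excl a c ra rc ac) (excl b c rb rc bc); rewrite le_min.
by case: (a \in y); case: (b \in y); case: (c \in y) => //= _ _ _; apply/andP; split; lra.
Qed.

Lemma dcost_KA_hit a b r : r \in [fset a; b]%fset ->
  dcost (Defs.pi_of R (KA a b)) r (next_pi [:: (1, KA a b)]) <= 0.
Proof.
move=> hit.
apply: le_trans (dcost_le (coupling_cost_pairs r
  (l := [:: (1, ([fset a; b], [fset a; b]))]%fset) _ _ _)) _.
- by rewrite /= ltr01.
- by move=> x; rewrite /fdist /= !big_cons !big_nil /=; lra.
- by move=> x; rewrite /next_pi /fdist /= !big_cons !big_nil /=; lra.
by rewrite /= !big_cons !big_nil /= cost_requested // distxx; lra.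
Qed.

Lemma dcost_KA_miss a b r : a != b -> r != a -> r != b ->
  dcost (Defs.pi_of R (KA a b)) r (next_pi [:: (1, KB r a b)]) <= 1.
Proof.
move=> ab ra rb.
apply: le_trans (dcost_le (coupling_cost_pairs r (l := [::
  (1/2, ([fset a; b], [fset r; a])); (1/2, ([fset a; b], [fset r; b]))]%fset) _ _ _)) _.
- by rewrite /= divr_gt0 ?ltr01 ?ltr0n.
- by move=> x; rewrite /fdist /= !big_cons !big_nil /=; lra.
- by move=> x; rewrite /next_pi /fdist /= !big_cons !big_nil /=; lra.
rewrite /= !big_cons !big_nil /= !cost_requested ?fset21 //.
by rewrite !dist_fset2_replace ?fset21 ?fset22 //; lra.
Qed.

Lemma dcost_KB_hit a b c :
  dcost (Defs.pi_of R (KB a b c)) a (next_pi [:: (1, KB a b c)]) <= 0.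
Proof.
apply: le_trans (dcost_le (coupling_cost_pairs a (l := [::
  (1/2, ([fset a; b], [fset a; b])); (1/2, ([fset a; c], [fset a; c]))]%fset) _ _ _)) _.
- by rewrite /= divr_gt0 ?ltr01 ?ltr0n.
- by move=> x; rewrite /fdist /= !big_cons !big_nil /=; lra.
- by move=> x; rewrite /next_pi /fdist /= !big_cons !big_nil /=; lra.
by rewrite /= !big_cons !big_nil /= !cost_requested ?fset21 // !distxx; lra.
Qed.

Lemma dcost_KB_move a b c : a != b -> a != c -> b != c ->
  dcost (Defs.pi_of R (KB a b c)) b (next_pi [:: (1, KA b a)]) <= 1/2.
Proof.
move=> ab ac bc.
apply: le_trans (dcost_le (coupling_cost_pairs b (l := [::
  (1/2, ([fset a; b], [fset b; a])); (1/2, ([fset a; c], [fset b; a]))]%fset) _ _ _)) _.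
- by rewrite /= divr_gt0 ?ltr01 ?ltr0n.
- by move=> x; rewrite /fdist /= !big_cons !big_nil /=; lra.
- by move=> x; rewrite /next_pi /fdist /= !big_cons !big_nil /=; lra.
rewrite /= !big_cons !big_nil /= !cost_requested ?fset21 //.
have ba : b != a by rewrite eq_sym.
by rewrite dist_fset2 // fset21 fset22 dist_fset2_replace ?fset21 //=; lra.
Qed.

Lemma dcost_KB_miss a b c r : a != b -> a != c -> r != a -> r != b -> r != c ->
  dcost (Defs.pi_of R (KB a b c)) r
    (next_pi [:: (1/3, KA r a); (1/3, KA r b); (1/3, KA r c)]) <= 1.
Proof.
move=> ab ac ra rb rc.
apply: le_trans (dcost_le (coupling_cost_pairs r (l := [::
  (1/6, ([fset a; b], [fset r; a])); (1/3, ([fset a; b], [fset r; b]));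
  (1/6, ([fset a; c], [fset r; a])); (1/3, ([fset a; c], [fset r; c]))]%fset)
  _ _ _)) _.
- by rewrite /= !divr_gt0 ?ltr01 ?ltr0n.
- by move=> x; rewrite /fdist /= !big_cons !big_nil /=; lra.
- by move=> x; rewrite /next_pi /fdist /= !big_cons !big_nil /=; lra.
rewrite /= !big_cons !big_nil /= !cost_requested ?fset21 //.
by rewrite !dist_fset2_replace ?fset21 ?fset22 //; lra.
Qed.

Lemma K2_is_ks_algorithm : is_ks_algorithm (@K2 R T).
Proof.
split=> [q qv|q r qv]; first by split; [exact: is_fsdist_pi_of | exact: estimator_omega_of].
have [hv hw hsum] := K2_weights r qv; split=> // x hx.
apply: update_ge_requested => //; first exact: estimator_omega_of.
  apply: estimator_wsum => //; first by apply: sub_all hw => p /ltW.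
  by move=> p; exact: estimator_omega_of.
by move=> y hy ry; exact: K2_requested.
Qed.

Lemma K2_ks_potential : is_ks_potential (@K2 R T) (@Phi2 R T) (3/2).
Proof.
split=> [[a b|a b c] _ /=|q r]; try lra.
case: q => [a b /= ab|a b c /and3P[ab ac bc]]; rewrite /step_cost; cbn [K2].
  case: ifP => [hit|/norP[ra rb]]; rewrite /= big_seq1 /=.
    have rab : r \in [fset a; b]%fset by rewrite !inE.
    by have /= := dcost_KA_hit rab; lra.
  by have /= := dcost_KA_miss ab ra rb; lra.
case: ifP => [/eqP->|/negbT ra]; cbn [fst snd].
  by have := dcost_KB_hit a b c; rewrite big_seq1; cbn [fst snd Phi2]; lra.
case: ifP => [/eqP->|/negbT rb]; cbn [fst snd].
  by have := dcost_KB_move ab ac bc; rewrite big_seq1; cbn [fst snd Phi2]; lra.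
case: ifP => [/eqP->|/negbT rc]; cbn [fst snd].
  have cb : c != b by rewrite eq_sym.
  have -> : Defs.pi_of R (KB a b c) = Defs.pi_of R (KB a c b).
    by apply/funext => x /=; rewrite addrC.
  by have := dcost_KB_move ac ab cb; rewrite big_seq1; cbn [fst snd Phi2]; lra.
have := dcost_KB_miss ab ac ra rb rc; rewrite !big_cons big_nil; cbn [fst snd Phi2].
lra.
Qed.
End K2.

Theorem mainTheorem9 (R : realType) (T : choiceType)
  (T_infinite : forall s : seq T, exists p : T, p \notin s) :
  is_ks_algorithm (@K2 R T) /\ is_ks_potential (@K2 R T) (@Phi2 R T) (3/2).
Proof. by split; [exact: K2_is_ks_algorithm | exact: K2_ks_potential]. Qed.
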